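(* The category $\mathsf{HSLat}$ does not satisfy normality of unions: there exist a Heyting semilattice $A$ and sub-Heyting semilattices $X\le B\le A$, $X\le C\le A$ such that $X$ is a normal subobject of $B$ and of $C$, but $X$ is not a normal subobject of the join $B\vee C$ in $A$. (For instance $A=C_4\times C_4$ with $C_4=\{0<1<2<3\}$, $X=\{(2,2),(3,3)\}$, $B=\{(0,1),(2,2),(3,3)\}$, $C=\{(1,0),(2,2),(3,3)\}$.) Consequently, normalisers do not exist in general in $\mathsf{HSLat}$.
   Context: A Heyting semilattice is a meet-semilattice with top $1$ and an operation $\Rightarrow$ with $x\wedge y\le z$ iff $x\le y\Rightarrow z$; morphisms preserve $1,\wedge,\Rightarrow$. A finite chain is a Heyting semilattice, and products are computed componentwise. A normal subobject is a kernel; in $\mathsf{HSLat}$ the normal subobjects of $A$ are exactly the filters of $A$ (non-empty, closed under $\wedge$, up-closed). A semi-abelian category satisfies normality of unions if, whenever $X\le B\le A$ and $X\le C\le A$ are subobjects with $X$ normal in both $B$ and $C$, then $X$ is normal in the join $B\vee C$ of subobjects of $A$. The normaliser of a subobject $X\le A$ is the largest subobject of $A$ in which $X$ is normal. *)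

(* A Heyting semilattice: a meet-semilattice with top 1 (presented
   algebraically: meet associative, commutative, idempotent, with unit top)
   together with an implication satisfying  x /\ y <= z  iff  x <= y => z,
   where  a <= b  means  a /\ b = a. *)
Record HSLat := {
  car :> Type;
  htop : car;
  hmeet : car -> car -> car;
  himp : car -> car -> car;
  hmeet_assoc : forall x y z, hmeet x (hmeet y z) = hmeet (hmeet x y) z;
  hmeet_comm : forall x y, hmeet x y = hmeet y x;
  hmeet_idem : forall x, hmeet x x = x;
  hmeet_top : forall x, hmeet x htop = x;
  himp_adj : forall x y z,
      hmeet (hmeet x y) z = hmeet x y <-> hmeet x (himp y z) = x
}.

Definition hle (A : HSLat) (x y : A) : Prop := hmeet A x y = x.

Definition subset {T : Type} (P Q : T -> Prop) : Prop := forall x, P x -> Q x.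

Definition is_subalg (A : HSLat) (S : A -> Prop) : Prop :=
  S (htop A) /\
  (forall x y, S x -> S y -> S (hmeet A x y)) /\
  (forall x y, S x -> S y -> S (himp A x y)).

(* X is normal in B (X <= B) iff X is a filter of B:
   non-empty, closed under meets, up-closed in B. *)
Definition normal_in (A : HSLat) (X B : A -> Prop) : Prop :=
  subset X B /\
  (exists x, X x) /\
  (forall x y, X x -> X y -> X (hmeet A x y)) /\
  (forall x y, X x -> B y -> hle A x y -> X y).

Definition join_sub (A : HSLat) (B C : A -> Prop) : A -> Prop :=
  fun a => forall S : A -> Prop, is_subalg A S -> subset B S -> subset C S -> S a.

Definition is_normaliser (A : HSLat) (X N : A -> Prop) : Prop :=
  is_subalg A N /\ normal_in A X N /\
  (forall M : A -> Prop, is_subalg A M -> normal_in A X M -> subset M N).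

(* In C4 x C4 the implications (1,0) => (0,1) = (0,3) and (0,3) => (2,2) = (3,2)
   lie in every subobject containing B and C, and (3,2) lies above (2,2) without
   belonging to X, so X is not up-closed in B \/ C.  A normaliser of X would
   contain B and C, hence B \/ C, and X would then be normal in B \/ C. *)
From Stdlib Require Import Setoid.

Section Product.
Variables A1 A2 : HSLat.

Definition prod_meet (p q : A1 * A2) : A1 * A2 :=
  (hmeet A1 (fst p) (fst q), hmeet A2 (snd p) (snd q)).

Definition prod_imp (p q : A1 * A2) : A1 * A2 :=
  (himp A1 (fst p) (fst q), himp A2 (snd p) (snd q)).

Lemma pair_eqE {T U : Type} (a c : T) (b d : U) : (a, b) = (c, d) <-> a = c /\ b = d.
Proof. split; [intro H; injection H; auto | intros [-> ->]; reflexivity]. Qed.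

Definition prod_HSLat : HSLat.
Proof.
  refine {| car := A1 * A2; htop := (htop A1, htop A2);
            hmeet := prod_meet; himp := prod_imp |};
    unfold prod_meet, prod_imp; simpl.
  - intros x y z; rewrite !hmeet_assoc; reflexivity.
  - intros x y; rewrite hmeet_comm, (hmeet_comm A2); reflexivity.
  - intros [a b]; rewrite !hmeet_idem; reflexivity.
  - intros [a b]; rewrite !hmeet_top; reflexivity.
  - intros [x1 x2] [y1 y2] [z1 z2]; simpl; rewrite !pair_eqE, !himp_adj.
    reflexivity.
Defined.

End Product.

Inductive c4 := c0 | c1 | c2 | c3.

Definition c4_le (x y : c4) : bool :=
  match x, y with
  | c0, _ | c1, (c1 | c2 | c3) | c2, (c2 | c3) | c3, c3 => true
  | _, _ => false
  end.

Definition c4_meet (x y : c4) : c4 := if c4_le x y then x else y.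

Definition c4_imp (x y : c4) : c4 := if c4_le x y then c3 else y.

Definition C4 : HSLat.
Proof.
  refine {| car := c4; htop := c3; hmeet := c4_meet; himp := c4_imp |};
    unfold c4_meet, c4_imp.
  - intros [] [] []; reflexivity.
  - intros [] []; reflexivity.
  - intros []; reflexivity.
  - intros []; reflexivity.
  - intros [] [] []; simpl; split; congruence.
Defined.

Section Normality.
Variable A : HSLat.

Lemma join_sub_subalg (B C : A -> Prop) : is_subalg A (join_sub A B C).
Proof.
  split; [|split].
  - intros S [Htop _] _ _; exact Htop.
  - intros x y Hx Hy S HS HB HC; apply HS; [apply Hx | apply Hy]; assumption.
  - intros x y Hx Hy S HS HB HC; apply HS; [apply Hx | apply Hy]; assumption.
Qed.

Lemma subset_join_subl (B C : A -> Prop) : subset B (join_sub A B C).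
Proof. intros x Bx S _ HB _; exact (HB x Bx). Qed.

Lemma subset_join_subr (B C : A -> Prop) : subset C (join_sub A B C).
Proof. intros x Cx S _ _ HC; exact (HC x Cx). Qed.

Lemma join_sub_least (B C S : A -> Prop) :
  is_subalg A S -> subset B S -> subset C S -> subset (join_sub A B C) S.
Proof. intros HS HB HC x Hx; exact (Hx S HS HB HC). Qed.

Lemma normal_in_subset (X M N : A -> Prop) :
  normal_in A X N -> subset X M -> subset M N -> normal_in A X M.
Proof.
  intros [_ [Hne [Hmeet Hup]]] HXM HMN.
  repeat split; auto.
  intros x y Xx My; apply Hup; auto.
Qed.

Lemma normaliser_normal_join (X B C N : A -> Prop) :
  is_normaliser A X N ->
  is_subalg A B -> is_subalg A C -> normal_in A X B -> normal_in A X C ->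
  normal_in A X (join_sub A B C).
Proof.
  intros [HN [HXN Hmax]] HB HC HXB HXC.
  apply (normal_in_subset X _ N HXN).
  - intros x Xx; apply subset_join_subl, (proj1 HXB), Xx.
  - apply join_sub_least; auto.
Qed.

End Normality.

Definition A44 : HSLat := prod_HSLat C4 C4.

Definition X44 (p : A44) : Prop := p = (c2, c2) \/ p = (c3, c3).
Definition B44 (p : A44) : Prop := p = (c0, c1) \/ X44 p.
Definition C44 (p : A44) : Prop := p = (c1, c0) \/ X44 p.

Ltac finite_subset_cases :=
  unfold is_subalg, normal_in, subset, hle, B44, C44, X44;
  repeat split; eauto;
  intros; repeat match goal with H : _ \/ _ |- _ => destruct H end;
  subst; simpl in *; try discriminate; auto.

Lemma X44_subalg : is_subalg A44 X44. Proof. finite_subset_cases. Qed.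
Lemma B44_subalg : is_subalg A44 B44. Proof. finite_subset_cases. Qed.
Lemma C44_subalg : is_subalg A44 C44. Proof. finite_subset_cases. Qed.
Lemma X44_normal_B44 : normal_in A44 X44 B44. Proof. finite_subset_cases. Qed.
Lemma X44_normal_C44 : normal_in A44 X44 C44. Proof. finite_subset_cases. Qed.

Lemma X44_not_normal_join : ~ normal_in A44 X44 (join_sub A44 B44 C44).
Proof.
  intros [_ [_ [_ Hup]]].
  pose proof (join_sub_subalg A44 B44 C44) as [_ [_ Himp]].
  assert (H32 : join_sub A44 B44 C44 (c3, c2)).
  { change (c3, c2) with (himp A44 (himp A44 (c1, c0) (c0, c1)) (c2, c2)).
    apply Himp; [apply Himp|].
    - apply subset_join_subr; left; reflexivity.
    - apply subset_join_subl; left; reflexivity.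
    - apply subset_join_subl; right; left; reflexivity. }
  assert (HX : X44 (c3, c2))
    by (apply (Hup (c2, c2)); [left; reflexivity | exact H32 | reflexivity]).
  destruct HX; discriminate.
Qed.

Theorem mainTheorem5 :
  (exists (A : HSLat) (X B C : A -> Prop),
      is_subalg A X /\ is_subalg A B /\ is_subalg A C /\
      subset X B /\ subset X C /\
      normal_in A X B /\ normal_in A X C /\
      ~ normal_in A X (join_sub A B C)) /\
  (exists (A : HSLat) (X : A -> Prop),
      is_subalg A X /\ ~ (exists N : A -> Prop, is_normaliser A X N)).
Proof.
  split.
  - exists A44, X44, B44, C44.
    split; [exact X44_subalg|]; split; [exact B44_subalg|];
      split; [exact C44_subalg|].
    split; [intros p Xp; right; exact Xp|]; split; [intros p Xp; right; exact Xp|].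
    split; [exact X44_normal_B44|]; split; [exact X44_normal_C44|].
    exact X44_not_normal_join.
  - exists A44, X44; split; [exact X44_subalg|].
    intros [N HN]; apply X44_not_normal_join.
    apply (normaliser_normal_join A44 X44 B44 C44 N HN); auto using
      B44_subalg, C44_subalg, X44_normal_B44, X44_normal_C44.
Qed.
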